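(* Let $n\geq 1$ and let $L$ be a Lie subalgebra of $\mathbb{W}_n$ with $\mathrm{GKdim}(L) = n$. Then $\dim_\Bbbk(L_{2,0}) = \infty$.
   Context: $\Bbbk$ is a field of characteristic zero, $\mathbb{W}_n = \sum_{k=1}^n \Bbbk[x_1,\dots,x_n]\partial_k$, $\partial_k = \partial/\partial x_k$. For a subalgebra $L$, $L_{2,0} = L \cap x_1^2\mathbb{W}_n = L\cap \sum_{k=1}^n x_1^2\Bbbk[x_1,\dots,x_n]\partial_k$. $\mathrm{GKdim}$ denotes Gelfand--Kirillov dimension of a Lie algebra: the supremum over finite-dimensional subspaces $V$ of the growth rate $\limsup_k \log\dim(V + C_1(V)+\dots+C_k(V))/\log k$, where $C_0(V)=V$ and $C_k(V) = [C_{k-1}(V),V]$. *)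

From HB Require Import structures.
From mathcomp Require Import all_boot all_order all_algebra.
From mathcomp Require Import all_classical all_reals all_analysis.
From mathcomp Require mpoly.
Import -(notations) mpoly.
From Stdlib Require Rdefinitions.
From mathcomp Require Import Rstruct.

Set Implicit Arguments.
Unset Strict Implicit.
Unset Printing Implicit Defensive.

Import Order.TTheory GRing.Theory Num.Theory.
Local Open Scope ring_scope.
Local Open Scope classical_set_scope.

(* Polynomial ring k[x_1..x_n] (indices 0..n-1). *)
Notation Pol K n := (mpoly.mpoly n K).

(* W_n = sum_k k[x_1..x_n] d_k : a vector field is the tuple of its
   coefficients (f_k)_k, standing for sum_k f_k d_k. *)
Notation Wn K n := ({ffun 'I_n -> Pol K n}).

Definition var (K : fieldType) (n : nat) (i : 'I_n) : Pol K n :=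
  mpoly.mpolyX K (mpoly.mnm1 i).

Definition pderiv (K : fieldType) (n : nat) (i : 'I_n) (p : Pol K n) : Pol K n :=
  mpoly.mderiv i p.

(* Lie bracket of vector fields:
   [sum_i f_i d_i, sum_i g_i d_i] = sum_k (sum_i (f_i d_i g_k - g_i d_i f_k)) d_k *)
Definition lie (K : fieldType) (n : nat) (f g : Wn K n) : Wn K n :=
  [ffun k => \sum_(i < n) (f i * pderiv i (g k) - g i * pderiv i (f k))].

Definition is_Lie_subalgebra (K : fieldType) (n : nat) (L : set (Wn K n)) : Prop :=
  [/\ L 0,
      (forall u v, L u -> L v -> L (u + v)),
      (forall (a : K) u, L u -> L (a *: u)) &
      (forall u v, L u -> L v -> L (lie u v))].

Definition span (K : fieldType) (V : lmodType K) (S : set V) : set V :=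
  [set v | exists (m : nat) (c : 'I_m -> K) (w : 'I_m -> V),
      (forall i, S (w i)) /\ v = \sum_(i < m) c i *: w i].

Definition lin_indep (K : fieldType) (V : lmodType K) (m : nat) (w : 'I_m -> V) : Prop :=
  forall c : 'I_m -> K, \sum_(i < m) c i *: w i = 0 -> forall i, c i = 0.

Definition dimE (K : fieldType) (V : lmodType K) (S : set V) : \bar Rdefinitions.R :=
  ereal_sup [set (m%:R)%:E | m in [set m : nat | exists w : 'I_m -> V,
                                     (forall i, S (w i)) /\ lin_indep w]].

(* C_0(V) = V, C_k(V) = [C_{k-1}(V), V], for V the span of the finite list s. *)
Fixpoint Cpow (K : fieldType) (n : nat) (s : seq (Wn K n)) (k : nat) : set (Wn K n) :=
  match k with
  | 0 => span [set v | v \in s]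
  | k'.+1 => span [set lie a b | a in Cpow s k' & b in span [set v | v \in s]]
  end.

Definition Csum (K : fieldType) (n : nat) (s : seq (Wn K n)) (k : nat) : set (Wn K n) :=
  span (\bigcup_(j in [set j : nat | (j <= k)%N]) Cpow s j).

(* limsup_k log dim(V + C_1(V) + ... + C_k(V)) / log k
   (the dimensions involved are always finite). *)
Definition growth (K : fieldType) (n : nat) (s : seq (Wn K n)) : \bar Rdefinitions.R :=
  limn_esup (fun k : nat =>
    ((ln (fine (dimE (Csum s k))) / ln (k%:R : Rdefinitions.R)))%:E).

(* Gelfand-Kirillov dimension of a Lie subalgebra L: supremum over the
   finite-dimensional subspaces V of L (= spans of finite lists in L). *)
Definition GKdim (K : fieldType) (n : nat) (L : set (Wn K n)) : \bar Rdefinitions.R :=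
  ereal_sup [set growth s | s in [set s : seq (Wn K n) | forall v, v \in s -> L v]].

(* L_{2,0} = L ∩ x_1^2 W_n, x_1 being the variable of index i1. *)
Definition L20 (K : fieldType) (n : nat) (i1 : 'I_n) (L : set (Wn K n)) : set (Wn K n) :=
  [set v | L v /\ forall k, exists g : Pol K n, v k = var K i1 ^+ 2 * g].

From Pilot Require Import Defs.
From HB Require Import structures.
From mathcomp Require Import all_boot all_order all_algebra.
From mathcomp Require Import all_classical all_reals all_analysis.
From mathcomp Require mpoly.
Import -(notations) mpoly.
From mathcomp Require Import Rstruct.
From mathcomp Require Import zify lra.
Set Implicit Arguments.
Unset Strict Implicit.
Unset Printing Implicit Defensive.
Import Order.TTheory GRing.Theory Num.Theory.
Local Open Scope ring_scope.

(* Suppose L_{2,0} had finite dimension M.  Take a finite subspace V of L whose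
   vector fields have polynomial coefficients of degree < d.  Every field in
   V + C_1(V) + ... + C_k(V) lies in L and has coefficients of degree
   < (k+1)(d+1).  Among such fields, a combination whose coefficients on all
   monomials of x_1-degree < 2 vanish is divisible by x_1^2, so it lies in
   L_{2,0}; hence the dimension is at most M + 2n((k+1)(d+1))^(n-1) = O(k^(n-1)).
   Therefore GKdim L <= n - 1/2 < n. *)

Lemma msize_mderiv_le (K : fieldType) (n : nat) (i : 'I_n) (p : Pol K n) :
  (msize (pderiv i p) <= msize p)%N.
Proof.
rewrite [X in (X <= _)%N]msizeE; apply/bigmax_leqP_seq => m + _.
rewrite mcoeff_msupp /pderiv mcoeff_deriv => hm.
have /msize_mdeg_lt : mnm_add m (mnm1 i) \in msupp p.
  by rewrite mcoeff_msupp; apply: contraNneq hm => ->; rewrite mul0rn.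
by rewrite mdegD mdeg1 addn1 => /ltnW.
Qed.

Section VectorFieldSize.
Variables (K : fieldType) (n : nat).
Implicit Types (u v : Wn K n) (S L : set (Wn K n)).

Definition vmsize v : nat := \max_(k < n) msize (v k).

Lemma msize_le_vmsize v k : (msize (v k) <= vmsize v)%N.
Proof. exact: (leq_bigmax_cond (F := fun k => msize (v k))). Qed.

Lemma vmsize_le v D : (forall k, msize (v k) <= D)%N -> (vmsize v <= D)%N.
Proof. by move=> h; apply/bigmax_leqP => k _; apply: h. Qed.

Lemma vmsize0 : vmsize 0 = 0%N.
Proof. by apply/eqP; rewrite -leqn0; apply: vmsize_le => k; rewrite ffunE msize0. Qed.

Lemma vmsizeD u v : (vmsize (u + v)%R <= maxn (vmsize u) (vmsize v))%N.
Proof.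
apply: vmsize_le => k; rewrite ffunE; apply: leq_trans (msizeD_le _ _) _.
by rewrite geq_max !leq_max !msize_le_vmsize orbT.
Qed.

Lemma vmsizeZ c v : (vmsize (c *: v) <= vmsize v)%N.
Proof.
by apply: vmsize_le => k; rewrite ffunE; apply: leq_trans (msizeZ_le _ _) _;
  apply: msize_le_vmsize.
Qed.

Lemma span_vmsize_le S D v :
  (forall u, S u -> vmsize u <= D)%N -> Defs.span S v -> (vmsize v <= D)%N.
Proof.
move=> hS [m [c [w [hw ->]]]].
apply: (big_ind (fun x => vmsize x <= D)%N); first by rewrite vmsize0.
  by move=> x y hx hy; apply: leq_trans (vmsizeD x y) _; rewrite geq_max hx.
by move=> i _; apply: leq_trans (vmsizeZ _ _) (hS _ (hw i)).
Qed.

Lemma vmsize_lie u v : (vmsize (lie u v) <= (vmsize u + vmsize v).+1)%N.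
Proof.
apply: vmsize_le => k; rewrite ffunE; apply: leq_trans (msize_sum _ _ _) _.
apply/bigmax_leqP_seq => i _ _; apply: leq_trans (msizeD_le _ _) _.
have hM (f g : Pol K n) a b : (msize f <= a)%N -> (msize g <= b)%N ->
    (msize (f * g) <= (a + b).+1)%N.
  by move=> hf hg; apply: leq_trans (msizeM_le _ _) _; rewrite ltnS leq_add.
have hd (w : Wn K n) j : (msize (pderiv i (w j)) <= vmsize w)%N.
  exact: leq_trans (msize_mderiv_le _ _) (msize_le_vmsize _ _).
by rewrite msizeN geq_max hM ?msize_le_vmsize //= addnC hM ?msize_le_vmsize.
Qed.

Lemma span_sub_Lie L S v :
  is_Lie_subalgebra L -> (forall u, S u -> L u) -> Defs.span S v -> L v.
Proof.
case=> L0 LD LZ _ hS [m [c [w [hw ->]]]].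
by elim/big_rec: _ => // i x _ hx; apply: LD => //; apply/LZ/hS.
Qed.

Variable s : seq (Wn K n).

Lemma Cpow_sub_Lie L j v :
  is_Lie_subalgebra L -> (forall u, u \in s -> L u) -> Cpow s j v -> L v.
Proof.
move=> hL hs; elim: j v => [|j IH] v /=; first exact: span_sub_Lie.
apply: span_sub_Lie => // _ [a Ha [b Hb <-]].
by case: (hL) => _ _ _; apply; [exact: IH | exact: span_sub_Lie Hb].
Qed.

Lemma Csum_sub_Lie L k v :
  is_Lie_subalgebra L -> (forall u, u \in s -> L u) -> Csum s k v -> L v.
Proof. by move=> hL hs; apply: span_sub_Lie => // u [j _]; apply: Cpow_sub_Lie. Qed.

Lemma Cpow_vmsize_le d j v :
  (forall u, u \in s -> vmsize u <= d)%N -> Cpow s j v -> (vmsize v <= j.+1 * d.+1)%N.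
Proof.
move=> hs; elim: j v => [|j IH] v /=.
  by move=> /(span_vmsize_le hs) /leq_trans; apply; rewrite mul1n.
apply: span_vmsize_le => _ [a Ha [b Hb <-]]; apply: leq_trans (vmsize_lie a b) _.
by rewrite mulSn (addnC d.+1) -addnS leq_add ?IH // ltnS (span_vmsize_le hs).
Qed.

Lemma Csum_vmsize_le d k v :
  (forall u, u \in s -> vmsize u <= d)%N -> Csum s k v -> (vmsize v <= k.+1 * d.+1)%N.
Proof.
move=> hs; apply: span_vmsize_le => u [j hj /(Cpow_vmsize_le hs)].
by move/leq_trans; apply; rewrite leq_mul2r ltnS hj orbT.
Qed.

End VectorFieldSize.

Section Dimension.
Variables (K : fieldType) (V : lmodType K).
Implicit Types (S : set V).

Definition dim_le S (M : nat) :=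
  forall m (w : 'I_m -> V), (forall i, S (w i)) -> lin_indep w -> (m <= M)%N.

Lemma dimE_ge0 S : (0 <= dimE S)%E.
Proof.
apply: ereal_sup_ubound; exists 0%N => //.
by exists (fun _ => 0); split; [case | move=> c _ []].
Qed.

Lemma dimE_le_nat S M : dim_le S M -> (dimE S <= (M%:R : Rdefinitions.R)%:E)%E.
Proof.
move=> hS; apply: ge_ereal_sup => _ [m [w [hw hi]] <-].
by rewrite lee_fin ler_nat; apply: hS hi.
Qed.

Lemma dimE_finite_dim_le S : dimE S != +oo%E -> exists M, dim_le S M.
Proof.
have hub m (w : 'I_m -> V) : (forall i, S (w i)) -> lin_indep w ->
    ((m%:R : Rdefinitions.R)%:E <= dimE S)%E.
  by move=> hw hi; apply: ereal_sup_ubound; exists m => //; exists w.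
move: (dimE_ge0 S) hub; case: (dimE S) => [r| |] //= + hub _.
rewrite lee_fin => r_ge0; exists (Num.Def.archi_bound r) => m w hw hi.
suff : (m%:R < (Num.Def.archi_bound r)%:R :> Rdefinitions.R) by rewrite ltr_nat => /ltnW.
by rewrite (le_lt_trans _ (archi_boundP r_ge0)) // -lee_fin (hub m w).
Qed.

Lemma lin_indep_row_free m r (w : 'I_m -> V) (B : 'M[K]_(r, m)) :
  lin_indep w -> row_free B -> lin_indep (fun j => \sum_i B j i *: w i).
Proof.
move=> hw hB c hc j.
have hcB : \row_j c j *m B = 0.
  apply/rowP => i; rewrite !mxE; under eq_bigr do rewrite mxE.
  apply: (hw (fun i => \sum_j c j * B j i)); rewrite -[RHS]hc.
  under eq_bigr do rewrite scaler_suml; rewrite exchange_big.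
  by apply: eq_bigr => k _; rewrite scaler_sumr; apply: eq_bigr => i' _; rewrite scalerA.
have /(congr1 (fun X : 'rV_r => X 0 j)) := row_free_inj hB (etrans hcB (esym (mul0mx _ B))).
by rewrite !mxE.
Qed.

Lemma dim_le_kernel S M T m (w : 'I_m -> V) (A : 'M[K]_(m, T)) :
  dim_le S M -> (forall c : 'rV_m, c *m A = 0 -> S (\sum_i c 0 i *: w i)) ->
  lin_indep w -> (m <= M + T)%N.
Proof.
move=> hS hA hw; pose B := row_base (kermx A).
have hBA : B *m A = 0 by apply/sub_kermxP; rewrite eq_row_base.
have hker : (\rank (kermx A) <= M)%N.
  apply: hS (lin_indep_row_free hw (row_base_free _)) => j.
  have := hA (row j B); rewrite -row_mul hBA row0 => /(_ erefl).
  by under eq_bigr do rewrite mxE.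
by rewrite -(subnK (rank_leq_row A)) -mxrank_ker leq_add // rank_leq_col.
Qed.

End Dimension.

Lemma var_sqr_dvd (K : fieldType) n (i : 'I_n) (p : Pol K n) :
  (forall m : multinom n, (m i < 2)%N -> mcoeff m p = 0) ->
  exists g, p = var K i ^+ 2 * g.
Proof.
move=> hp; pose e := mnm_muln (mnm1 i) 2.
exists (\sum_(m <- msupp p) mcoeff m p *: mpolyX K (mnm_sub m e)).
rewrite /var mpolyXn -/e mulr_sumr {1}(mpolyE p); apply: eq_big_seq => m hm.
rewrite -scalerAr -mpolyXD; congr (_ *: mpolyX K _).
apply/mnmP => j; rewrite mnmDE mnmBE /e mulmnE mnm1E.
have [<-|_] := eqVneq i j; last by rewrite mul0n add0n subn0.
rewrite mul1n subnKC // leqNgt; move: hm; rewrite mcoeff_msupp.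
by apply: contraL => /hp ->; rewrite eqxx.
Qed.

Section LowDegreeInFirstVariable.
Variables (K : fieldType) (n' : nat).
Local Notation N := n'.+1.

(* The monomial x_1^(t.1) * \prod_j x_(j+2)^(t.2 j); variable x_1 has index [ord0]. *)
Definition low_mnm D (t : 'I_2 * {ffun 'I_n' -> 'I_D}) : multinom N :=
  Multinom [tuple if unlift ord0 i is Some j then val (t.2 j) else val t.1 | i < N].
Arguments low_mnm : clear implicits.

Lemma low_mnm_surj D (m : multinom N) :
  (m ord0 < 2)%N -> (forall i, m i < D)%N -> exists t, m = low_mnm D t.
Proof.
move=> m0 mD; exists (Ordinal m0, [ffun j => Ordinal (mD (lift ord0 j))]).
apply/mnmP => i; rewrite /low_mnm multinomE tnth_mktuple.
by case: unliftP => [j ->|->] /=; rewrite ?ffunE.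
Qed.

Lemma dim_le_vmsize (L : set (Wn K N)) M D :
  is_Lie_subalgebra L -> dim_le (L20 ord0 L) M ->
  dim_le [set v | L v /\ (vmsize v <= D)%N] (M + N * (2 * D ^ n')).
Proof.
move=> hL hM m w hw hi.
pose T := ('I_N * ('I_2 * {ffun 'I_n' -> 'I_D}))%type.
pose A : 'M[K]_(m, #|{: T}|) :=
  \matrix_(i, j) mcoeff (low_mnm D (enum_val j).2) (w i (enum_val j).1).
have <- : #|{: T}| = (N * (2 * D ^ n'))%N by rewrite !card_prod card_ffun !card_ord.
apply: (dim_le_kernel (A := A) hM _ hi) => c hcA; split.
  apply: (span_sub_Lie (S := range w) hL); first by move=> _ [i _ <-]; case: (hw i).
  by exists m, (c 0), w; split => // i; exists i.
(* A combination killed by [A] has no coefficient on a monomial of x_1-degree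
   < 2 and degree < D; by the degree bound it has none of degree >= D either. *)
move=> k; apply: var_sqr_dvd => mm mm0.
rewrite sum_ffunE raddf_sum /=.
under eq_bigr do rewrite ffunE mcoeffZ.
have [Dmm|mmD] := leqP D (mdeg mm).
  apply: big1 => i _; rewrite memN_msupp_eq0 ?mulr0 // msize_mdeg_ge //.
  by apply: leq_trans (msize_le_vmsize (w i) k) (leq_trans _ Dmm); case: (hw i).
have [t ->] : exists t, mm = low_mnm D t.
  apply: low_mnm_surj => // j; apply: leq_ltn_trans mmD.
  by rewrite mdegE (bigD1 j) ?leq_addr.
transitivity ((c *m A) 0 (enum_rank (k, t))); last by rewrite hcA mxE.
by rewrite mxE; apply: eq_bigr => i _; rewrite mxE enum_rankK.
Qed.

End LowDegreeInFirstVariable.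

Lemma ln_div_ln_le (R : realType) (x : R) (C k e : nat) :
  (0 < C)%N -> (1 < k)%N -> (C ^ 2 <= k)%N -> x <= (C * k ^ e)%:R ->
  ln x / ln k%:R <= e%:R + 2^-1.
Proof.
move=> C_gt0 k_gt1 C2k xle.
have k_gt0 : (0 < k)%N by apply: ltnW.
have lnk_gt0 : 0 < ln (k%:R : R) by rewrite ln_gt0 // ltr1n.
have lnC_ge0 : 0 <= ln (C%:R : R) by rewrite ln_ge0 // ler1n.
have lnCk : ln ((C * k ^ e)%:R : R) = ln C%:R + e%:R * ln k%:R.
  by rewrite natrM natrX lnM ?posrE ?exprn_gt0 ?ltr0n // lnXn ?ltr0n // mulr_natl.
have lnx_le : ln x <= ln C%:R + e%:R * ln k%:R.
  rewrite -lnCk; have [x_le0|x_gt0] := leP x 0.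
    apply: le_trans (ln_le0 (le_trans x_le0 ler01)) _.
    by rewrite lnCk addr_ge0 // mulr_ge0 // ltW.
  by rewrite ler_ln // posrE (lt_le_trans x_gt0).
have lnC2 : 2 * ln (C%:R : R) <= ln k%:R.
  rewrite -[2]/(2%:R) mulr_natl -lnXn ?ltr0n // -natrX.
  by rewrite ler_ln ?posrE ?ltr0n ?expn_gt0 ?C_gt0 ?ler_nat.
rewrite ler_pdivrMr //; nra.
Qed.

Lemma limn_esup_le_eventually (R : realType) (u : (\bar R)^nat) N0 a :
  (forall k, (N0 <= k)%N -> (u k <= a)%E) -> (limn_esup u <= a)%E.
Proof.
move=> ua; pose tail := [set k : nat | (N0 <= k)%N]%classic.
apply: (@le_trans _ _ (ereal_sup (u @` tail))).
  by apply: ereal_inf_lbound; exists tail => //; exists N0.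
by apply: ge_ereal_sup => _ [k Nk <-]; apply: ua.
Qed.

Lemma dim_le_subset (K : fieldType) (V : lmodType K) (S S' : set V) M M' :
  (forall v, S v -> S' v) -> (M' <= M)%N -> dim_le S' M' -> dim_le S M.
Proof.
move=> SS' MM' hS' m w hw hi; apply: leq_trans MM'.
by apply: hS' hi => i; apply/SS'/hw.
Qed.

Section Growth.
Variables (K : fieldType) (n' : nat).
Local Notation N := n'.+1.

Lemma dim_le_Csum (L : set (Wn K N)) M (s : seq (Wn K N)) d k :
  is_Lie_subalgebra L -> dim_le (L20 ord0 L) M -> (forall v, v \in s -> L v) ->
  (forall v, v \in s -> vmsize v <= d)%N -> (0 < k)%N ->
  dim_le (Csum s k) ((M + N * (2 * (2 * d.+1) ^ n')).+1 * k ^ n').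
Proof.
move=> hL hM hs hd k_gt0.
apply: (dim_le_subset _ _ (dim_le_vmsize (D := k.+1 * d.+1) hL hM)).
  by move=> v hv; split; [exact: Csum_sub_Lie hv | exact: Csum_vmsize_le hv].
have kn_gt0 : (0 < k ^ n')%N by rewrite expn_gt0 k_gt0.
have hpow : ((k.+1 * d.+1) ^ n' <= (2 * d.+1) ^ n' * k ^ n')%N.
  rewrite -expnMn; case: (posnP n') => [->|n'_gt0]; first by rewrite !expn0.
  by rewrite leq_exp2r // mulnAC leq_mul2r ltn_Pmull ?orbT.
move: hpow kn_gt0; set P := (k ^ n')%N; set Q := ((2 * d.+1) ^ n')%N.
set X := ((k.+1 * d.+1) ^ n')%N; nia.
Qed.

Lemma growth_le (L : set (Wn K N)) M (s : seq (Wn K N)) :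
  is_Lie_subalgebra L -> dim_le (L20 ord0 L) M -> (forall v, v \in s -> L v) ->
  (growth s <= (n'%:R + 2^-1 : Rdefinitions.R)%:E)%E.
Proof.
move=> hL hM hs; pose d := \max_(v <- s) vmsize v.
have hd v : v \in s -> (vmsize v <= d)%N by move=> vs; rewrite /d (big_rem v) //= leq_maxl.
pose C := (M + N * (2 * (2 * d.+1) ^ n')).+1.
apply: (limn_esup_le_eventually (N0 := maxn 2 (C ^ 2))) => k.
rewrite geq_max => /andP[k_gt1 C2k].
have /dimE_le_nat := dim_le_Csum hL hM hs hd (ltnW k_gt1).
move: (dimE_ge0 (Csum s k)); case: (dimE (Csum s k)) => [x| |] //= _.
by rewrite !lee_fin => /ln_div_ln_le; apply.
Qed.

End Growth.

Theorem mainTheorem18 (K : fieldType) (hK : [pchar K] =i pred0)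
    (n : nat) (hn : (0 < n)%N) (L : set (Wn K n)) :
  is_Lie_subalgebra L ->
  GKdim L = ((n%:R : Rdefinitions.R))%:E ->
  dimE (L20 (Ordinal hn) L) = +oo%E.
Proof.
move=> hL hGK.
have [//|/dimE_finite_dim_le [M hM]] := eqVneq (dimE (L20 (Ordinal hn) L)) +oo%E.
case: n hn L hL hGK hM => [//|n'] hn L hL hGK.
rewrite (_ : Ordinal hn = ord0); last exact: val_inj.
move=> hM; have : (GKdim L <= (n'%:R + 2^-1 : Rdefinitions.R)%:E)%E.
  by apply: ge_ereal_sup => _ [s hs <-]; apply: growth_le hL hM hs.
by rewrite hGK lee_fin mulrS addrC lerD2l invf_ge1 // -[1]/(1%:R) ler_nat.
Qed.
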